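(* Let $\Sigma$ be a $\delta$-set and let $s=\max\Sigma$. Then $|\Sigma|\ge\lceil (s+1)/2\rceil$.
   Context: All graphs are finite and simple; $d(u,v)$ denotes the usual graph distance (infinite between different components). For a set $J$ of nonnegative integers, a distance $J$-labeling of $G$ is a function $f:V(G)\to J$ with $f(V(G))=J$ such that whenever two distinct vertices $u,v$ satisfy $f(u)=f(v)=k$, we have $d(u,v)=k$. It is proper if every $k\in J\setminus\{0\}$ is the label of at least two vertices. A finite nonempty set $\Sigma$ of nonnegative integers is a $\delta$-set if there exists a graph admitting a proper distance $\Sigma$-labeling. *)

From mathcomp Require Import all_boot.
Set Implicit Arguments. Unset Strict Implicit. Unset Printing Implicit Defensive.

Definition simple_graph (T : finType) (e : rel T) : Prop :=
  symmetric e /\ irreflexive e.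

(* d(u,v) = k : there is a walk of length k from u to v and none shorter.
   (If u, v lie in different components no k satisfies this, i.e. d = oo.) *)
Definition graph_dist (T : finType) (e : rel T) (u v : T) (k : nat) : Prop :=
  (exists p : seq T, [/\ path e u p, last u p = v & size p = k]) /\
  (forall p : seq T, path e u p -> last u p = v -> k <= size p).

(* J is represented as a duplicate-free list of naturals. *)
Definition distance_labeling (T : finType) (e : rel T) (J : seq nat)
  (f : T -> nat) : Prop :=
  [/\ forall v, f v \in J,
      forall k, k \in J -> exists v, f v = k &
      forall u v k, u != v -> f u = k -> f v = k -> graph_dist e u v k].

Definition proper_distance_labeling (T : finType) (e : rel T) (J : seq nat)
  (f : T -> nat) : Prop :=
  distance_labeling e J f /\
  forall k, k \in J -> k != 0 -> exists u v, [/\ u != v, f u = k & f v = k].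

Definition delta_set (Sigma : seq nat) : Prop :=
  uniq Sigma /\ Sigma != [::] /\
  exists (T : finType) (e : rel T) (f : T -> nat),
    simple_graph e /\ proper_distance_labeling e Sigma f.

From mathcomp Require Import all_boot.
From mathcomp Require Import zify.

(* Let s = max Sigma and join two vertices labelled s by a geodesic x_0, ..., x_s.
   Subpaths of a geodesic are geodesics, so two vertices x_i, x_j (i < j) with the
   same label k satisfy j - i = d(x_i, x_j) = k.  A label therefore occurs at most
   twice on the geodesic (a third occurrence x_l would give l - i = k = j - i), so
   the s + 1 vertices of the geodesic carry at least (s + 1)/2 distinct labels. *)

Lemma bigmax_seq_mem (S : seq nat) :
  0 < \max_(k <- S) k -> \max_(k <- S) k \in S.
Proof.
elim: S => [|k S IH]; rewrite ?big_nil // big_cons in_cons.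
move: IH; set M := \max_(j <- S) j => IH.
case: (leqP k M) => _; last by rewrite eqxx.
by move=> /IH ->; rewrite orbT.
Qed.

Lemma size_le_double_undup (T : eqType) (s : seq T) :
  (forall x, count_mem x s <= 2) -> size s <= 2 * size (undup s).
Proof.
move=> count_le2.
rewrite -(perm_size (perm_count_undup s)) size_flatten /shape -map_comp.
elim: (undup s) => //= x r IH.
by rewrite size_nseq mulnS leq_add.
Qed.

Lemma count_iota_le2 (g : nat -> nat) n k :
  (forall i j, i < j < n -> g i = k -> g j = k -> j - i = k) ->
  count (fun i => g i == k) (iota 0 n) <= 2.
Proof.
move=> gaps; rewrite -size_filter.
have : sorted ltn (filter (fun i => g i == k) (iota 0 n)).
  by apply: sorted_filter; [exact: ltn_trans | exact: iota_ltn_sorted].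
have : all (fun i => (i < n) && (g i == k)) (filter (fun i => g i == k) (iota 0 n)).
  by apply/allP => i; rewrite mem_filter mem_iota andbC add0n.
case: filter => [|i [|j [|l r]]] //= /and4P[/andP[_ /eqP gi] /andP[_ /eqP gj]
  /andP[ln /eqP gl] _] /and3P[ij jl _].
have := gaps i j ltac:(lia) gi gj; have := gaps i l ltac:(lia) gi gl; lia.
Qed.

Section GraphDist.
Variables (T : finType) (e : rel T).

Lemma graph_dist_unique u v k1 k2 :
  graph_dist e u v k1 -> graph_dist e u v k2 -> k1 = k2.
Proof.
move=> [[p1 [p1_path p1_last <-]] min1] [[p2 [p2_path p2_last <-]] min2].
by apply/eqP; rewrite eqn_leq min1 // min2.
Qed.

Lemma graph_dist_xx u k : graph_dist e u u k -> k = 0.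
Proof. by move=> [_ min]; apply/eqP; rewrite -leqn0 (min [::]). Qed.

Section Geodesic.
Variables (u v : T) (p : seq T).
Hypotheses (p_path : path e u p) (p_last : last u p = v)
  (p_min : forall q, path e u q -> last u q = v -> size p <= size q).

Let x i := last u (take i p).

Lemma geodesic_subpath_dist i j :
  i <= j <= size p -> graph_dist e (x i) (x j) (j - i).
Proof.
move=> /andP[ij j_size]; split.
  exists (drop i (take j p)); split.
  - have : path e u (take j p) by apply: take_path.
    by rewrite -{1}(cat_take_drop i (take j p)) cat_path take_takel // => /andP[].
  - by rewrite /x -(take_takel p ij) -last_cat cat_take_drop.
  - by rewrite size_drop size_takel.
move=> r r_path r_last.
have tail_path : path e (x j) (drop j p).
  by move: p_path; rewrite -{1}(cat_take_drop j p) cat_path => /andP[].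
have := p_min (take i p ++ r ++ drop j p).
rewrite !cat_path take_path //= r_path r_last tail_path !last_cat r_last.
rewrite /x -last_cat cat_take_drop p_last => /(_ isT erefl).
rewrite !size_cat size_drop size_takel; lia.
Qed.

End Geodesic.
End GraphDist.

Theorem mainTheorem12 (Sigma : seq nat) :
  delta_set Sigma ->
  (\max_(k <- Sigma) k + 2) %/ 2 <= size Sigma.
Proof.
move=> [_ [Sigma_neq0 [T [e [f [_ [[f_in _ f_dist] f_proper]]]]]]].
set s := \max_(k <- Sigma) k.
have [->|s_gt0] := posnP s; first by case: Sigma Sigma_neq0 {f_in f_dist f_proper s}.
have [u [v [uv fu fv]]] := f_proper s (bigmax_seq_mem _ s_gt0) (lt0n_neq0 s_gt0).
have [[p [p_path p_last p_size]] p_min] := f_dist u v s uv fu fv.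
rewrite -p_size in p_min.
pose x i := last u (take i p).
have gaps i j : i < j <= s -> f (x i) = f (x j) -> j - i = f (x i).
  move=> /andP[ij js] fij.
  have dij : graph_dist e (x i) (x j) (j - i).
    by apply: geodesic_subpath_dist p_path p_last p_min _ _ _; lia.
  have xij : x i != x j.
    by apply: contraTneq ij => xij; move: dij; rewrite xij => /graph_dist_xx; lia.
  exact: graph_dist_unique dij (f_dist _ _ _ xij erefl (esym fij)).
pose labels := map (f \o x) (iota 0 s.+1).
have labels_fibers k : count_mem k labels <= 2.
  rewrite count_map; apply: count_iota_le2 => i j ijs <- /esym fij.
  by apply: gaps fij; lia.
have labels_undup : size (undup labels) <= size Sigma.
  apply: uniq_leq_size (undup_uniq _) _ => y.
  by rewrite mem_undup => /mapP[i _ ->]; apply: f_in.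
have := size_le_double_undup _ _ labels_fibers; rewrite size_map size_iota; lia.
Qed.
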